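(* Let $k$ be a difference field and $D$ a finitely generated difference $k$-algebra which is an integral domain. Then for some $n$, $\sigma^n(D)$ is a difference domain (i.e. $\sigma$ is injective on $\sigma^n(D)$). In fact, if $R$ is a finitely generated $k$-subalgebra of $D$ generating $D$ as a difference ring, and $b$ is the dimension growth degree of $D$ with respect to $R$, then one can take $n\le b$.
   Context: A difference $k$-algebra is a $k$-algebra with an endomorphism $\sigma$ extending that of $k$. For $R$ as in the statement, let $R_m$ be the subring of $D$ generated by $R\cup\sigma(R)\cup\dots\cup\sigma^{m-1}(R)$ and $c(m)$ the transcendence degree over $k$ of its fraction field; there are integers $a,b$ with $c(m)=am+b$ for all sufficiently large $m$, and $b$ is called the dimension growth degree. *)

From HB Require Import structures.
From mathcomp Require Import all_boot all_order all_algebra.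
From mathcomp Require Import mpoly.
Set Implicit Arguments. Unset Strict Implicit. Unset Printing Implicit Defensive.
Import Order.TTheory GRing.Theory Num.Theory.
Local Open Scope ring_scope.

Section DiffAlg.
Variables (k : fieldType) (D : idomainType) (iota : {rmorphism k -> D}).
Variable (sig : D -> D).

Definition is_subring (S : D -> Prop) : Prop :=
  [/\ S 0, S 1, (forall x y, S x -> S y -> S (x - y)) &
      (forall x y, S x -> S y -> S (x * y))].

Definition subring_gen (A : D -> Prop) : D -> Prop :=
  fun x => forall S, is_subring S -> (forall a, A a -> S a) -> S x.

Definition dsubring_gen (A : D -> Prop) : D -> Prop :=
  fun x => forall S, is_subring S -> (forall a, A a -> S a) ->
    (forall y, S y -> S (sig y)) -> S x.

Definition ksubalg_gen (g : seq D) : D -> Prop :=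
  subring_gen (fun x => (exists c, x = iota c) \/ x \in g).

Definition fg_ksubalg (R : D -> Prop) : Prop :=
  exists g : seq D, forall x, R x <-> ksubalg_gen g x.

Definition Rm (R : D -> Prop) (m : nat) : D -> Prop :=
  subring_gen (fun x => exists j, (j < m)%N /\ exists y, R y /\ x = iter j sig y).

Definition alg_indep (n : nat) (x : 'I_n -> D) : Prop :=
  forall p : {mpoly k[n]}, mmap iota x p = 0 -> p = 0.

(* The transcendence degree over k of the fraction field of the subring S
   (a domain containing k) equals d: maximal size of an algebraically
   independent family of elements of S. *)
Definition trdeg_eq (S : D -> Prop) (d : nat) : Prop :=
  (exists x : 'I_d -> D, (forall i, S (x i)) /\ alg_indep x) /\
  (forall x : 'I_d.+1 -> D, (forall i, S (x i)) -> ~ alg_indep x).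

Definition dim_growth (R : D -> Prop) (a b : int) : Prop :=
  exists M : nat, forall m : nat, (M <= m)%N ->
    exists d : nat, trdeg_eq (Rm R m) d /\ d%:Z = a * m%:Z + b.

Definition inj_on_iter (n : nat) : Prop :=
  forall x y, sig (iter n sig x) = sig (iter n sig y) -> iter n sig x = iter n sig y.

End DiffAlg.

(* Write c(m) for the transcendence degree of R_m = k[g, sig g, ..., sig^(m-1) g].
   Transcendence degree is subadditive, and sig does not increase it:
   trdeg k[sig G] <= trdeg k[G], strictly if sig kills a nonzero z in k[G],
   because such a z is algebraically independent over any lift of a
   transcendence basis of sig G.  If sig is not injective on sig^i(D) for
   every i < L, the kernel witnesses lie in some R_m0, and applying
   sig, ..., sig^n to the generators of R_m loses L degrees, so that
   c(m + n) + L <= c(m) + c(n) for m >= m0 and n >= L.  When c(m) = a m + b this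
   gives L <= b; and these inequalities cannot hold for every L at once.
   All bounds on transcendence degree rest on a count of monomials of bounded
   degree: if G is algebraic over k[s], then k[G] has at most |s| algebraically
   independent elements. *)

From HB Require Import structures.
From mathcomp Require Import all_boot all_order all_algebra.
From mathcomp Require Import mpoly.
From mathcomp Require Import ring zify.
From Stdlib Require Import Classical IndefiniteDescription.
Import Order.TTheory GRing.Theory Num.Theory.
Local Open Scope ring_scope.
Set Implicit Arguments. Unset Strict Implicit. Unset Printing Implicit Defensive.

Lemma wide_mx_left_kernel (F : fieldType) m n (A : 'M[F]_(m, n)) :
  (n < m)%N -> exists2 u : 'rV_m, u != 0 & u *m A = 0.
Proof.
move=> ltnm; suff /rowV0Pn[u /sub_kermxP uA u_neq0] : kermx A != 0 by exists u.
rewrite kermx_eq0 /row_free; apply: contraTneq (rank_leq_col A) => ->.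
by rewrite -ltnNge.
Qed.

Lemma subset_map_preim (T U : eqType) (f : T -> U) (s : seq T) (t : seq U) :
  {subset t <= map f s} -> exists2 w, {subset w <= s} & map f w = t.
Proof.
elim: t => [|y t IH] ts; first by exists [::].
have [w ws <-] := IH (fun z zt => ts z (mem_behead (s := y :: t) zt)).
have /mapP[x xs ->] := ts y (mem_head _ _).
by exists (x :: w) => // z; rewrite inE => /predU1P[->|/ws].
Qed.

Section KSpan.
Variables (k : fieldType) (D : idomainType) (iota : {rmorphism k -> D}).
Implicit Types (P Q : D -> Prop) (c : k) (a v w z : D).

Inductive kspan P : D -> Prop :=
| kspan0 : kspan P 0
| kspan_cons c z v : P z -> kspan P v -> kspan P (iota c * z + v).

Lemma kspan_mono P Q v : (forall z, P z -> Q z) -> kspan P v -> kspan Q v.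
Proof. by move=> PQ; elim=> [|c z w Pz _ IH]; [exact: kspan0 | apply: kspan_cons; auto]. Qed.

Lemma kspan_mem P z : P z -> kspan P z.
Proof.
move=> Pz; rewrite -[z]addr0 -[z]mul1r -(rmorph1 iota).
exact: kspan_cons (kspan0 _).
Qed.

Lemma kspanD P v w : kspan P v -> kspan P w -> kspan P (v + w).
Proof.
move=> hv hw; elim: hv => [|c z u Pz _ IH]; first by rewrite add0r.
by rewrite -addrA; apply: kspan_cons.
Qed.

Lemma kspanZ P c v : kspan P v -> kspan P (iota c * v).
Proof.
elim=> [|c' z u Pz _ IH]; first by rewrite mulr0; apply: kspan0.
by rewrite mulrDr mulrA -rmorphM; apply: kspan_cons.
Qed.

Lemma kspanN P v : kspan P v -> kspan P (- v).
Proof. by move=> h; rewrite -mulN1r -(rmorphN1 iota); apply: kspanZ. Qed.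

Lemma kspanB P v w : kspan P v -> kspan P w -> kspan P (v - w).
Proof. by move=> hv hw; apply: kspanD => //; apply: kspanN. Qed.

Lemma kspan_sum P (I : eqType) (r : seq I) (F : I -> D) :
  (forall i, i \in r -> kspan P (F i)) -> kspan P (\sum_(i <- r) F i).
Proof.
elim: r => [|i r IH] hF; first by rewrite big_nil; apply: kspan0.
rewrite big_cons; apply: kspanD; first by apply: hF; rewrite mem_head.
by apply: IH => j jr; apply: hF; rewrite inE jr orbT.
Qed.

Lemma kspan_mull P Q a v : (forall z, P z -> kspan Q (a * z)) -> kspan P v -> kspan Q (a * v).
Proof.
move=> hQ; elim=> [|c z u Pz _ IH]; first by rewrite mulr0; apply: kspan0.
by rewrite mulrDr mulrCA; apply: kspanD => //; apply: kspanZ; apply: hQ.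
Qed.

Lemma kspanM P Q S v w : (forall p q, P p -> Q q -> kspan S (p * q)) ->
  kspan P v -> kspan Q w -> kspan S (v * w).
Proof.
move=> hS hv hw; elim: hv => [|c z u Pz _ IH]; first by rewrite mul0r; apply: kspan0.
rewrite mulrDl -mulrA; apply: kspanD => //; apply: kspanZ.
by apply: kspan_mull hw => q Qq; apply: hS.
Qed.

Lemma kspan_coords (ws : seq D) v : kspan (fun z => z \in ws) v ->
  exists c : 'I_(size ws) -> k, v = \sum_(i < size ws) iota (c i) * ws`_i.
Proof.
elim=> [|c z u zws _ [cu ->]].
  by exists (fun _ => 0); rewrite big1 // => i _; rewrite rmorph0 mul0r.
have lt_z : (index z ws < size ws)%N by rewrite index_mem.
exists (fun i => cu i + (if val i == index z ws then c else 0)).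
under [RHS]eq_bigr => i _ do rewrite rmorphD mulrDl.
rewrite big_split /= addrC; congr (_ + _).
rewrite (bigD1 (Ordinal lt_z)) //= eqxx nth_index // big1 ?addr0 // => i ne_iz.
by rewrite ifN ?rmorph0 ?mul0r //; apply: contra ne_iz => /eqP e; apply/eqP/val_inj.
Qed.

Lemma kspan_dependent (T : eqType) (L : seq T) (v : T -> D) (ws : seq D) :
  uniq L -> (size ws < size L)%N -> (forall t, t \in L -> kspan (fun z => z \in ws) (v t)) ->
  exists c : T -> k, (exists2 t, t \in L & c t != 0) /\
    \sum_(t <- L) iota (c t) * v t = 0.
Proof.
move=> uL ltL hv.
have t0 : T by move: ltL; case: (L) => [|t ?].
have /fin_all_exists [r hr] : forall i : 'I_(size L), exists r : 'I_(size ws) -> k,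
    v (nth t0 L i) = \sum_(j < size ws) iota (r j) * ws`_j.
  by move=> i; apply: kspan_coords; apply: hv; rewrite mem_nth.
have [u /rV0Pn[j u_j] uA] := wide_mx_left_kernel (\matrix_(i, j) r i j) ltL.
pose idx t := insubd j (index t L) : 'I_(size L).
have idxK (i : 'I_(size L)) : idx (nth t0 L i) = i.
  by apply: val_inj; rewrite /idx index_uniq // valKd.
exists (fun t => u 0 (idx t)); split; first by exists (nth t0 L j); rewrite ?mem_nth ?idxK.
rewrite (big_nth t0) big_mkord.
under eq_bigr => i _ do rewrite idxK hr mulr_sumr.
rewrite exchange_big /=; apply: big1 => j0 _.
under eq_bigr => i _ do rewrite mulrA -rmorphM.
rewrite -big_distrl -rmorph_sum /=.
suff -> : \sum_i u 0 i * r i j0 = (u *m \matrix_(i, j) r i j) 0 j0.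
  by rewrite uA mxE rmorph0 mul0r.
by rewrite mxE; apply: eq_bigr => i _; rewrite mxE.
Qed.

End KSpan.

Section Monomials.
Variables (k : fieldType) (D : idomainType) (iota : {rmorphism k -> D}).
Implicit Types (s t : seq D) (e f : nat -> nat).

Definition monomial s e := \prod_(0 <= i < size s) s`_i ^+ e i.
Definition monomial_seq s (g : seq nat) := monomial s (nth 0%N g).

Lemma eq_monomial s e f : (forall i, (i < size s)%N -> e i = f i) ->
  monomial s e = monomial s f.
Proof. by move=> ef; apply: eq_big_nat => i /andP[_ lti]; rewrite ef. Qed.

Lemma monomialD s e f : monomial s (fun i => e i + f i)%N = monomial s e * monomial s f.
Proof. by rewrite /monomial -big_split /=; apply: eq_bigr => i _; rewrite exprD. Qed.

Lemma monomial0 s : monomial s (fun=> 0%N) = 1.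
Proof. by rewrite /monomial big1 // => i _; rewrite expr0. Qed.

Lemma monomial_eq1 s e : (forall i, (i < size s)%N -> e i = 0%N) -> monomial s e = 1.
Proof. by move=> e0; rewrite -(monomial0 s); apply: eq_monomial. Qed.

Lemma monomial_cons a s e : monomial (a :: s) e = a ^+ e 0%N * monomial s (fun i => e i.+1).
Proof. by rewrite /monomial /= big_nat_recl. Qed.

Lemma monomial_seq_cons a s x g : monomial_seq (a :: s) (x :: g) = a ^+ x * monomial_seq s g.
Proof. by rewrite /monomial_seq monomial_cons. Qed.

Lemma monomial_delta s j : (j < size s)%N -> monomial s (fun i => (i == j) : nat) = s`_j.
Proof.
move=> ltj; rewrite /monomial big_mkord (bigD1 (Ordinal ltj)) //= eqxx expr1.
rewrite big1 ?mulr1 // => i ne_ij; suff /negbTE -> : val i != j by rewrite expr0.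
by apply: contra ne_ij => /eqP e; apply/eqP/val_inj.
Qed.

Lemma monomial_split s e j : (j < size s)%N ->
  monomial s e = s`_j ^+ e j * monomial s (fun i => if i == j then 0%N else e i).
Proof.
move=> ltj; rewrite /monomial !big_mkord (bigD1 (Ordinal ltj)) //=.
rewrite [X in _ = _ * X](bigD1 (Ordinal ltj)) //= eqxx expr0 mul1r.
congr (_ * _); apply: eq_bigr => i ne_ij; rewrite ifN //.
Qed.

Lemma monomial_catr s t e :
  monomial s e = monomial (s ++ t) (fun i => if (i < size s)%N then e i else 0%N).
Proof.
rewrite /monomial size_cat (big_cat_nat (leq0n (size s)) (leq_addr _ _)) /=.
rewrite [X in _ = _ * X]big1_seq ?mulr1; last first.
  by move=> i /andP[_]; rewrite mem_index_iota => /andP[le_si _]; rewrite ltnNge le_si expr0.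
by apply: eq_big_nat => i /andP[_ lti]; rewrite nth_cat lti.
Qed.

Lemma rmorph_monomial (f : {rmorphism D -> D}) s e :
  f (monomial s e) = monomial (map f s) e.
Proof.
rewrite /monomial rmorph_prod size_map; apply: eq_big_nat => i /andP[_ lti].
by rewrite rmorphXn (nth_map 0).
Qed.

Fixpoint exps_lt (n B : nat) : seq (seq nat) :=
  if n is n'.+1 then [seq i :: g | i <- seq.iota 0 B, g <- exps_lt n' B] else [:: [::]].

Lemma size_exps_lt n B : size (exps_lt n B) = (B ^ n)%N.
Proof. by elim: n => [|n IH] //=; rewrite size_allpairs size_iota IH expnS. Qed.

Lemma uniq_exps_lt n B : uniq (exps_lt n B).
Proof.
elim: n => [|n IH] //=; apply: allpairs_uniq => //; first exact: iota_uniq.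
by move=> [a b] [c d] _ _ [-> ->].
Qed.

Lemma mem_exps_lt n B g :
  (g \in exps_lt n B) = (size g == n) && all (fun i => i < B)%N g.
Proof.
elim: n g => [|n IH] [|a g] //=; first by apply/negbTE/allpairsP => -[[x y] [_ _]].
apply/allpairsP/idP => [[[x y] /= [hx hy [-> ->]]]|/andP[sz /andP[ha hg]]].
  by move: hx hy; rewrite mem_iota add0n IH /= => -> /andP[/eqP -> ->]; rewrite eqxx.
by exists (a, g); rewrite mem_iota add0n ha IH /= hg andbT.
Qed.

Definition alg_indep_seq s := forall (L : seq (seq nat)) (c : seq nat -> k),
  uniq L -> (forall g, g \in L -> size g = size s) ->
  \sum_(g <- L) iota (c g) * monomial_seq s g = 0 -> forall g, g \in L -> c g = 0.

Lemma alg_indep_seq_nil : alg_indep_seq [::].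
Proof.
move=> L c uL sz rel g gL; have g0 : g = [::] by apply/eqP; rewrite -size_eq0 sz.
move: rel; rewrite (bigD1_seq g) //= big_seq_cond big1 ?addr0; last first.
  move=> g' /andP[g'L]; rewrite g0; apply: contraNeq => _.
  by rewrite -size_eq0 sz.
by rewrite /monomial_seq /monomial big_nil mulr1 => /eqP; rewrite fmorph_eq0 => /eqP.
Qed.

Lemma alg_indep_seq_take s r : alg_indep_seq s -> alg_indep_seq (take r s).
Proof.
move=> hI L c uL sz rel g gL.
set r' := size (take r s).
have le_r's : (r' <= size s)%N by rewrite /r' size_take; case: ltnP => [/ltnW|].
pose pad (y : seq nat) := y ++ nseq (size s - r') 0%N.
have padK y : size y = r' -> take r' (pad y) = y by move=> sy; rewrite take_size_cat.
have monomial_pad y : size y = r' -> monomial_seq s (pad y) = monomial_seq (take r s) y.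
  move=> sy; rewrite /monomial_seq /monomial -/r' (big_cat_nat (leq0n r') le_r's) /=.
  rewrite [X in _ * X = _]big1_seq ?mulr1; last first.
    move=> i /andP[_]; rewrite mem_index_iota => /andP[le_ri _].
    by rewrite /pad nth_cat sy ltnNge le_ri /= nth_nseq if_same expr0.
  apply: eq_big_nat => i /andP[_ lti]; rewrite /pad nth_cat sy lti nth_take //.
  by move: lti; rewrite /r' size_take; case: (ltnP r (size s)) => h1 h2; lia.
have := hI [seq pad y | y <- L] (fun y => c (take r' y)).
rewrite map_inj_in_uniq => [/(_ uL) hpad|x y xL yL /(congr1 (take r'))]; last by rewrite !padK ?sz.
rewrite -(padK g) ?sz //; apply: hpad (map_f _ gL).
  by move=> y /mapP[y' y'L ->]; rewrite size_cat size_nseq sz // subnKC.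
rewrite big_map -[RHS]rel big_seq [RHS]big_seq; apply: eq_bigr => y yL.
by rewrite padK ?monomial_pad ?sz.
Qed.

Lemma size_codom_ord d (x : 'I_d -> D) : size (codom x) = d.
Proof. by rewrite size_codom card_ord. Qed.

Lemma nth_codom_ord d (x : 'I_d -> D) (i : 'I_d) : (codom x)`_i = x i.
Proof. by rewrite (nth_map i) ?size_enum_ord // nth_ord_enum. Qed.

Lemma codom_nth t n : size t = n -> codom (fun i : 'I_n => t`_i) = t.
Proof.
move=> st; apply: (@eq_from_nth _ 0); first by rewrite size_codom_ord.
by move=> i; rewrite size_codom_ord => lti; rewrite (nth_codom_ord _ (Ordinal lti)).
Qed.

Lemma monomial_seq_codom d (x : 'I_d -> D) g :
  monomial_seq (codom x) g = \prod_(i < d) x i ^+ nth 0%N g i.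
Proof.
rewrite /monomial_seq /monomial size_codom_ord big_mkord.
by apply: eq_bigr => i _; rewrite nth_codom_ord.
Qed.

Definition mnm_of_seq d (g : seq nat) : 'X_{1..d} := [multinom nth 0%N g i | i < d].

Lemma mmap_mnm_of_seq d (x : 'I_d -> D) g :
  mmap1 x (mnm_of_seq d g) = monomial_seq (codom x) g.
Proof. by rewrite monomial_seq_codom; apply: eq_bigr => i _; rewrite mnmE. Qed.

Lemma alg_indep_seq_codom d (x : 'I_d -> D) :
  alg_indep iota x -> alg_indep_seq (codom x).
Proof.
move=> hx L c uL szL rel g gL.
pose p : {mpoly k[d]} := \sum_(g <- L) c g *: 'X_[mnm_of_seq d g].
have /hx/(congr1 (mcoeff (mnm_of_seq d g))) : mmap iota x p = 0.
  rewrite -[RHS]rel /p raddf_sum /=; apply: eq_bigr => g' _.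
  by rewrite mmapZ mmapX mmap_mnm_of_seq.
rewrite /p raddf_sum mcoeff0 /= (bigD1_seq g) //= mcoeffZ mcoeffX eqxx mulr1.
rewrite big_seq_cond big1 ?addr0 // => g' /andP[g'L ne_g'g].
rewrite mcoeffZ mcoeffX; case: eqP => [/mnmP E|]; last by rewrite mulr0.
case/negP: ne_g'g; apply/eqP/(@eq_from_nth _ 0%N); first by rewrite !szL.
by move=> i; rewrite szL // size_codom_ord => lti; have := E (Ordinal lti); rewrite !mnmE.
Qed.

Lemma alg_indep_codom_seq d (x : 'I_d -> D) :
  alg_indep_seq (codom x) -> alg_indep iota x.
Proof.
move=> hx p px0; apply/eqP/negPn/negP => p_neq0.
pose sq (m : 'X_{1..d}) : seq nat := [seq m i | i <- enum 'I_d].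
have sqK m : mnm_of_seq d (sq m) = m.
  by apply/mnmP => i; rewrite mnmE (nth_map i) ?size_enum_ord // nth_ord_enum.
have sq_inj : injective sq by move=> m1 m2 e; rewrite -(sqK m1) e sqK.
have := hx [seq sq m | m <- msupp p] (fun g => p@_(mnm_of_seq d g)).
rewrite map_inj_uniq // msupp_uniq big_map => /(_ isT).
have -> : \sum_(m <- msupp p) iota p@_(mnm_of_seq d (sq m)) * monomial_seq (codom x) (sq m)
          = mmap iota x p.
  by apply: eq_bigr => m _; rewrite -mmap_mnm_of_seq sqK.
move=> /(_ _ px0) pm0; case/negP: p_neq0; apply/eqP.
rewrite [p]mpolyE big_seq big1 // => m mp.
have := pm0 _ (sq m); rewrite sqK => -> //; first by rewrite scale0r.
  by move=> g /mapP[m' _ ->]; rewrite size_map size_enum_ord size_codom_ord.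
exact: map_f.
Qed.

End Monomials.

Section Polynomials.
Variables (k : fieldType) (D : idomainType) (iota : {rmorphism k -> D}).
Local Notation kspan := (kspan iota).
Implicit Types (s G u : seq D) (h g v z a : D) (e f : nat -> nat).

Definition exps_bounded (n : nat) e (B : nat) := forall i, (i < n)%N -> (e i < B)%N.
Definition total_deg s e := (\sum_(0 <= j < size s) e j)%N.

Lemma leq_exp_total_deg s e i : (i < size s)%N -> (e i <= total_deg s e)%N.
Proof. by move=> lti; rewrite /total_deg big_mkord (bigD1 (Ordinal lti)) //= leq_addr. Qed.

Definition kalg s := kspan (fun z => exists e, z = monomial s e).
Definition kalg_lt s K := kspan (fun z => exists e, exps_bounded (size s) e K /\ z = monomial s e).
Definition kalg_deg s d := kspan (fun z => exists e, (total_deg s e <= d)%N /\ z = monomial s e).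

Lemma kalg1 s : kalg s 1.
Proof. by apply: kspan_mem; exists (fun=> 0%N); rewrite monomial0. Qed.

Lemma kalgM s a b : kalg s a -> kalg s b -> kalg s (a * b).
Proof.
apply: kspanM => _ _ [e ->] [f ->].
by apply: kspan_mem; exists (fun i => e i + f i)%N; rewrite monomialD.
Qed.

Lemma kalg_mem s g : g \in s -> kalg s g.
Proof.
move=> gs; apply: kspan_mem; exists (fun i => (i == index g s) : nat).
by rewrite monomial_delta ?index_mem // nth_index.
Qed.

Lemma kalg_cons a s p : kalg s p -> kalg (a :: s) p.
Proof.
apply: kspan_mono => _ [e ->]; exists (fun i => if i is i'.+1 then e i' else 0%N).
by rewrite monomial_cons expr0 mul1r.
Qed.

Lemma kalg_catr s t p : kalg s p -> kalg (s ++ t) p.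
Proof. by apply: kspan_mono => _ [e ->]; eexists; apply: monomial_catr. Qed.

Lemma kalg_catl s t p : kalg s p -> kalg (t ++ s) p.
Proof. by elim: t => [|a t IH] //= hp; apply/kalg_cons/IH. Qed.

Lemma kalg_lt_mono s K K' v : (K <= K')%N -> kalg_lt s K v -> kalg_lt s K' v.
Proof.
move=> le_KK'; apply: kspan_mono => _ [e [he ->]]; exists e; split => // i lti.
exact: leq_trans (he i lti) le_KK'.
Qed.

Lemma kalg_bounded s v : kalg s v -> exists K, kalg_lt s K v.
Proof.
elim=> [|c _ u [e ->] _ [K hK]]; first by exists 0%N; apply: kspan0.
exists (K + (total_deg s e).+1)%N; apply: kspan_cons.
  exists e; split => // i lti; apply: leq_trans (leq_addl K _).
  by rewrite ltnS leq_exp_total_deg.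
exact: kalg_lt_mono (leq_addr _ _) hK.
Qed.

Lemma kalg_deg_mono s d d' v : (d <= d')%N -> kalg_deg s d v -> kalg_deg s d' v.
Proof.
move=> le_dd'; apply: kspan_mono => _ [e [he ->]]; exists e; split => //.
exact: leq_trans le_dd'.
Qed.

Lemma kalg_deg1 s : kalg_deg s 0 1.
Proof. by apply: kspan_mem; exists (fun=> 0%N); rewrite monomial0 /total_deg big1. Qed.

Lemma kalg_degM s d1 d2 a b :
  kalg_deg s d1 a -> kalg_deg s d2 b -> kalg_deg s (d1 + d2) (a * b).
Proof.
apply: kspanM => _ _ [e [he ->]] [f [hf ->]]; apply: kspan_mem.
exists (fun i => e i + f i)%N; rewrite monomialD; split => //.
by rewrite /total_deg big_split leq_add.
Qed.

Lemma kalg_degX s d a n : kalg_deg s d a -> kalg_deg s (d * n) (a ^+ n).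
Proof.
move=> ha; elim: n => [|n IH]; first by rewrite muln0 expr0; apply: kalg_deg1.
by rewrite exprS mulnS; apply: kalg_degM.
Qed.

Lemma kalg_deg_bounded s v : kalg s v -> exists d, kalg_deg s d v.
Proof.
elim=> [|c _ u [e ->] _ [d hd]]; first by exists 0%N; apply: kspan0.
exists (d + total_deg s e)%N; apply: kspan_cons; first by exists e; split; rewrite ?leq_addl.
exact: kalg_deg_mono (leq_addr _ _) hd.
Qed.

Lemma kalg_deg_uniform s u : (forall z, z \in u -> kalg s z) ->
  exists d, forall z, z \in u -> kalg_deg s d z.
Proof.
elim: u => [|x u IH] hu; first by exists 0%N.
have [d hd] := IH (fun z zu => hu z (mem_behead (s := x :: u) zu)).
have [d1 hd1] := kalg_deg_bounded (hu x (mem_head _ _)).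
exists (d + d1)%N => z; rewrite inE => /predU1P[->|zu].
  exact: kalg_deg_mono (leq_addl _ _) hd1.
exact: kalg_deg_mono (leq_addr _ _) (hd _ zu).
Qed.

Lemma kalg_subring s : is_subring (kalg s).
Proof.
split; [exact: kspan0 | exact: kalg1 | | exact: kalgM].
by move=> a b; apply: kspanB.
Qed.

Lemma ksubalg_gen_kalg s z : ksubalg_gen iota s z -> kalg s z.
Proof.
apply; first exact: kalg_subring.
move=> _ [[c ->]|/kalg_mem //]; rewrite -[iota c]mulr1.
exact: kspanZ (kalg1 _).
Qed.

End Polynomials.

Section AlgebraicOver.
Variables (k : fieldType) (D : idomainType) (iota : {rmorphism k -> D}).
Local Notation kspan := (kspan iota).
Local Notation kalg := (kalg iota).
Local Notation kalg_lt := (kalg_lt iota).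
Implicit Types (s G u : seq D) (h g v z a : D) (e f : nat -> nat).

(* [h * g ^+ E] is a [k[s]]-combination of lower powers of [g]: [g] is integral over [k[s][1/h]]. *)
Definition lead_rel s h E g :=
  kspan (fun z => exists p i, [/\ kalg s p, (i < E)%N & z = p * g ^+ i]) (h * g ^+ E).

Definition algebraic_over s g := exists h E, [/\ h != 0, kalg s h & lead_rel s h E g].

Definition lead_rel_lt s K E g h :=
  kspan (fun z => exists e i, [/\ exps_bounded (size s) e K, (i < E)%N &
    z = monomial s e * g ^+ i]) (h * g ^+ E).

Lemma algebraic_over_mem s g : g \in s -> algebraic_over s g.
Proof.
move=> gs; exists 1, 1%N; split; [exact: oner_neq0 | exact: kalg1 |].
apply: kspan_mem; exists g, 0%N; split; [exact: kalg_mem | by [] |].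
by rewrite mul1r expr1 expr0 mulr1.
Qed.

Lemma algebraic_over_mono s s' g : (forall p, kalg s p -> kalg s' p) ->
  algebraic_over s g -> algebraic_over s' g.
Proof.
move=> ss' [h [E [h_neq0 hs hrel]]]; exists h, E; split => //; first exact: ss'.
by apply: kspan_mono hrel => _ [p [i [hp ltiE ->]]]; exists p, i; split => //; apply: ss'.
Qed.

Lemma lead_rel_mull s a h E b g :
  kalg s a -> lead_rel s h E g -> lead_rel s (a * h) (E + b) g.
Proof.
move=> ha hrel; rewrite /lead_rel; have -> : a * h * g ^+ (E + b) = (a * g ^+ b) * (h * g ^+ E).
  by rewrite exprD; ring.
apply: kspan_mull hrel => _ [p [i [hp ltiE ->]]]; apply: kspan_mem.
exists (a * p), (i + b)%N; split; [exact: kalgM | by rewrite ltn_add2r |].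
by rewrite exprD; ring.
Qed.

Lemma common_lead_rel s G : (forall g, g \in G -> algebraic_over s g) ->
  exists h E, [/\ h != 0, kalg s h, (0 < E)%N & forall g, g \in G -> lead_rel s h E g].
Proof.
elim: G => [|g G IH] halg.
  by exists 1, 1%N; split => //; [exact: oner_neq0 | exact: kalg1].
have [h [E [h_neq0 hs E_gt0 hG]]] := IH (fun g' g'G => halg g' (mem_behead (s := g :: G) g'G)).
have [h1 [E1 [h1_neq0 h1s h1rel]]] := halg g (mem_head _ _).
exists (h1 * h), (E + E1)%N; split; [by rewrite mulf_neq0 | exact: kalgM | by rewrite ltn_addr |].
move=> g'; rewrite inE => /predU1P[->|g'G]; last exact: lead_rel_mull (hG _ g'G).
by rewrite mulrC addnC; apply: lead_rel_mull.
Qed.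

Lemma lead_rel_lt_mono s K K' E g h :
  (K <= K')%N -> lead_rel_lt s K E g h -> lead_rel_lt s K' E g h.
Proof.
move=> le_KK'; apply: kspan_mono => _ [e [i [he ltiE ->]]]; exists e, i; split => //.
by move=> j ltj; exact: leq_trans (he j ltj) le_KK'.
Qed.

Lemma lead_rel_bounded s h E g : lead_rel s h E g -> exists K, lead_rel_lt s K E g h.
Proof.
rewrite /lead_rel /lead_rel_lt; elim: (h * g ^+ E) / => [|c _ u [p [i [hp ltiE ->]]] _ [K hK]].
  by exists 0%N; apply: kspan0.
have [K1 hK1] := kalg_bounded hp.
exists (K + K1)%N; apply: kspanD; last first.
  apply: kspan_mono hK => _ [e [j [he ltjE ->]]]; exists e, j; split => // l ltl.
  exact: leq_trans (he l ltl) (leq_addr _ _).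
apply: kspanZ; rewrite mulrC; apply: kspan_mull hK1 => _ [e [he ->]]; apply: kspan_mem.
exists e, i; split; [|by []|by rewrite mulrC].
by move=> j ltj; exact: leq_trans (he j ltj) (leq_addl _ _).
Qed.

Lemma common_lead_rel_bounded s G h E : kalg s h -> (forall g, g \in G -> lead_rel s h E g) ->
  exists K, kalg_lt s K h /\ forall g, g \in G -> lead_rel_lt s K E g h.
Proof.
move=> hs; elim: G => [|g G IH] hG; first by have [K hK] := kalg_bounded hs; exists K.
have [K [hK hKG]] := IH (fun g' g'G => hG g' (mem_behead (s := g :: G) g'G)).
have [K1 hK1] := lead_rel_bounded (hG g (mem_head _ _)).
exists (K + K1)%N; split; first exact: kalg_lt_mono (leq_addr _ _) hK.
move=> g'; rewrite inE => /predU1P[->|g'G]; first exact: lead_rel_lt_mono (leq_addl _ _) hK1.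
exact: lead_rel_lt_mono (leq_addr _ _) (hKG _ g'G).
Qed.

End AlgebraicOver.

Section Reduction.
Variables (k : fieldType) (D : idomainType) (iota : {rmorphism k -> D}).
Local Notation kspan := (kspan iota).
Variables (s G : seq D) (h : D) (K E : nat).
Hypotheses (hK : kalg_lt iota s K h) (E_gt0 : (0 < E)%N)
  (hrel : forall j, (j < size G)%N -> lead_rel_lt iota s K E G`_j h).

Definition reduced T := kspan (fun z => exists e f, [/\ exps_bounded (size s) e T,
  exps_bounded (size G) f E & z = monomial s e * monomial G f]).

Lemma reduced_mull T v : reduced T v -> reduced (T + K) (h * v).
Proof.
apply: kspan_mull => _ [e [f [he hf ->]]].
rewrite mulrC; apply: kspan_mull hK => _ [e' [he' ->]]; apply: kspan_mem.
exists (fun i => e' i + e i)%N, f; split => //; last by rewrite monomialD; ring.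
by move=> i lti; have := he i lti; have := he' i lti; lia.
Qed.

Lemma reduced_mul_gen T j v : (j < size G)%N -> reduced T v -> reduced (T + K) (h * G`_j * v).
Proof.
move=> ltj; apply: kspan_mull => _ [e [f [he hf ->]]].
pose f0 i := if i == j then 0%N else f i.
have splitG n : monomial G (fun i => if i == j then n else f i) = G`_j ^+ n * monomial G f0.
  rewrite (monomial_split _ ltj) eqxx; congr (_ * _); apply: eq_monomial => i _.
  by rewrite /f0; case: (i == j).
have [ltfE|] := ltnP (f j).+1 E.
  have -> : h * G`_j * (monomial s e * monomial G f) =
            h * (monomial s e * monomial G (fun i => if i == j then (f j).+1 else f i)).
    by rewrite [in RHS]splitG (monomial_split _ ltj) exprS; ring.
  apply/reduced_mull/kspan_mem; exists e, (fun i => if i == j then (f j).+1 else f i).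
  by split => // i lti; case: (i == j) => //; exact: hf.
rewrite leq_eqVlt ltnNge hf // orbF => /eqP Efj.
have -> : h * G`_j * (monomial s e * monomial G f) =
          (monomial s e * monomial G f0) * (h * G`_j ^+ E).
  by rewrite (monomial_split _ ltj) Efj exprS; ring.
apply: kspan_mull (hrel ltj) => _ [e' [i [he' ltiE ->]]]; apply: kspan_mem.
exists (fun i => e' i + e i)%N, (fun l => if l == j then i else f l); split.
- by move=> l ltl; have := he l ltl; have := he' l ltl; lia.
- by move=> l ltl; case: (l == j) => //; exact: hf.
by rewrite monomialD [in RHS]splitG; ring.
Qed.

Lemma reduced_pow N f : (total_deg G f <= N)%N -> reduced (1 + N * K) (h ^+ N * monomial G f).
Proof.
elim: N f => [|N IH] f.
  rewrite leqn0 => /eqP f0; rewrite monomial_eq1 => [|i lti]; last first.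
    by apply/eqP; rewrite -leqn0 -f0 leq_exp_total_deg.
  rewrite expr0 mul1r; apply: kspan_mem; exists (fun=> 0%N), (fun=> 0%N).
  by split => //; rewrite !monomial0 mulr1.
have [[j [ltj fj_gt0]]|f0] := classic (exists j, (j < size G)%N /\ (0 < f j)%N); last first.
  rewrite monomial_eq1 => [_|i lti]; last first.
    by apply/eqP; rewrite -leqn0 leqNgt; apply/negP => fi_gt0; apply: f0; exists i.
  rewrite mulr1 exprS mulSn addnCA addnC; apply: reduced_mull.
  have := IH (fun=> 0%N); rewrite monomial0 mulr1 addnC; apply.
  by rewrite /total_deg big1.
pose f' i := if i == j then (f j).-1 else f i.
have deg_f : total_deg G f = (total_deg G f').+1.
  rewrite /total_deg !big_mkord (bigD1 (Ordinal ltj)) //= [in RHS](bigD1 (Ordinal ltj)) //=.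
  rewrite /f' eqxx -{1}(prednK fj_gt0) addSn; congr (_ + _).+1; apply: eq_bigr => i ne_ij.
  by rewrite ifN //; apply: contra ne_ij => /eqP e; apply/eqP/val_inj.
rewrite deg_f ltnS => /IH /(reduced_mul_gen ltj).
have -> : h ^+ N.+1 * monomial G f = h * G`_j * (h ^+ N * monomial G f').
  rewrite (monomial_split _ ltj) [monomial G f'](monomial_split _ ltj) /f' eqxx.
  have -> : monomial G (fun i => if i == j then 0%N else if i == j then (f j).-1 else f i) =
            monomial G (fun i => if i == j then 0%N else f i).
    by apply: eq_monomial => i _; case: (i == j).
  by rewrite -{1}(prednK fj_gt0) !exprS; ring.
by congr (reduced _ _); lia.
Qed.

End Reduction.

Lemma exps_count_lt a q r d K E : (a < r)%N -> (0 < E)%N ->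
  ((1 + d * ((1 + d * r * K) ^ a * E ^ q + 1) * r * K) ^ a * E ^ q <
   ((1 + d * r * K) ^ a * E ^ q + 1) ^ r)%N.
Proof.
move=> lt_ar E_gt0; set C := (1 + d * r * K)%N; set B := (C ^ a * E ^ q + 1)%N.
have B_gt0 : (0 < B)%N by rewrite /B addn1.
have le_CB : (1 + d * B * r * K <= C * B)%N.
  rewrite /C mulnDl mul1n leq_add // -!mulnA leq_mul2l (mulnC B) -!mulnA leq_mul2l.
  by rewrite mulnC leqnn !orbT.
apply: leq_trans (leq_pexp2l B_gt0 lt_ar); rewrite expnS.
have le_pow n : ((1 + d * B * r * K) ^ n <= (C * B) ^ n)%N.
  by case: n => [|n] //; rewrite leq_exp2r.
apply: leq_ltn_trans (leq_mul (le_pow a) (leqnn (E ^ q))) _.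
by rewrite expnMn mulnAC ltn_pmul2r ?expn_gt0 ?B_gt0 // /B addn1.
Qed.

Section TranscendenceBound.
Variables (k : fieldType) (D : idomainType) (iota : {rmorphism k -> D}).
Local Notation kspan := (kspan iota).
Local Notation kalg_deg := (kalg_deg iota).
Implicit Types (s G u : seq D).

Lemma kalg_deg_monomial_seq G u d B b : (forall z, z \in u -> kalg_deg G d z) ->
  size b = size u -> all (fun i => i < B)%N b ->
  kalg_deg G (d * B * size u) (monomial_seq u b).
Proof.
move=> hu sb bB; rewrite /monomial_seq /monomial.
suff prefix n : (n <= size u)%N ->
    kalg_deg G (d * B * n) (\prod_(0 <= l < n) u`_l ^+ nth 0%N b l) by exact: prefix.
elim: n => [|n IH] le_nu; first by rewrite big_nil muln0; apply: kalg_deg1.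
rewrite big_nat_recr //= mulnS addnC; apply: kalg_degM; first exact: IH (ltnW le_nu).
apply: kalg_deg_mono (kalg_degX _ (hu _ (mem_nth 0 le_nu))).
by rewrite leq_mul // ltnW //; apply: (allP bB); rewrite mem_nth // sb.
Qed.

(* After multiplication by [h ^+ N], the [B ^ size u] monomials in [u] with
   exponents [< B] all lie in a span of dimension [T ^ size s * E ^ size G], with
   [T] linear in [B]; for [size s < size u] they must then be dependent. *)
Lemma alg_indep_size_le s G u : (forall g, g \in G -> algebraic_over iota s g) ->
  (forall z, z \in u -> kalg iota G z) -> alg_indep_seq iota u -> (size u <= size s)%N.
Proof.
move=> halg hu hI; rewrite leqNgt; apply/negP => lt_su.
have [h [E [h_neq0 hs E_gt0 hG]]] := common_lead_rel halg.
have [K [hK hKG]] := common_lead_rel_bounded hs hG.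
have hrel j : (j < size G)%N -> lead_rel_lt iota s K E G`_j h.
  by move=> ltj; apply/hKG/mem_nth.
have [d hd] := kalg_deg_uniform hu.
set r := size u; set a := size s; set q := size G.
set B := ((1 + d * r * K) ^ a * E ^ q + 1)%N.
set N := (d * B * r)%N; set T := (1 + N * K)%N.
pose ws := [seq monomial s (nth 0%N x) * monomial G (nth 0%N y) |
            x <- exps_lt a T, y <- exps_lt q E].
have hws b : b \in exps_lt r B -> kspan (fun z => z \in ws) (h ^+ N * monomial_seq u b).
  rewrite mem_exps_lt => /andP[/eqP sb bB].
  apply: kspan_mull (kalg_deg_monomial_seq hd sb bB) => _ [f [hf ->]].
  apply: kspan_mono (reduced_pow hK E_gt0 hrel hf) => _ [e [f' [he hf' ->]]].
  apply/allpairsP; exists (mkseq e a, mkseq f' q).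
  rewrite !mem_exps_lt !size_mkseq !eqxx /=; split.
  - by apply/allP => x /mapP[i]; rewrite mem_iota => /andP[_ lti] ->; exact: he.
  - by apply/allP => x /mapP[i]; rewrite mem_iota => /andP[_ lti] ->; exact: hf'.
  by congr (_ * _); apply: eq_monomial => i lti; rewrite nth_mkseq.
have lt_ws : (size ws < size (exps_lt r B))%N.
  by rewrite size_allpairs !size_exps_lt; apply: exps_count_lt.
have [c [[b0 b0B cb0_neq0] hsum]] := kspan_dependent (uniq_exps_lt r B) lt_ws hws.
have rel : \sum_(b <- exps_lt r B) iota (c b) * monomial_seq u b = 0.
  have : h ^+ N * \sum_(b <- exps_lt r B) iota (c b) * monomial_seq u b = 0.
    by rewrite mulr_sumr -[RHS]hsum; apply: eq_bigr => b _; ring.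
  by move/eqP; rewrite mulf_eq0 expf_eq0 (negbTE h_neq0) andbF => /eqP.
have sz b : b \in exps_lt r B -> size b = size u by rewrite mem_exps_lt => /andP[/eqP].
by move: cb0_neq0; rewrite (hI _ c (uniq_exps_lt r B) sz rel _ b0B) eqxx.
Qed.

End TranscendenceBound.

Section TranscendenceBasis.
Variables (k : fieldType) (D : idomainType) (iota : {rmorphism k -> D}).
Local Notation kspan := (kspan iota).
Local Notation kalg := (kalg iota).
Local Notation alg_indep_seq := (alg_indep_seq iota).
Local Notation algebraic_over := (algebraic_over iota).
Implicit Types (s G : seq D) (a : D) (L : seq (seq nat)) (c : seq nat -> k).

Definition monomial_comb s P := exists L c, [/\ uniq L,
  (forall g, g \in L -> size g = size s) & P = \sum_(g <- L) iota (c g) * monomial_seq s g].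

Lemma monomial_comb_kalg s P : monomial_comb s P -> kalg s P.
Proof.
move=> [L [c [_ _ ->]]]; apply: kspan_sum => g _; apply/kspanZ/kspan_mem.
by exists (nth 0%N g).
Qed.

Lemma not_alg_indep_seq s : ~ alg_indep_seq s -> exists L c, [/\ uniq L,
  (forall g, g \in L -> size g = size s),
  \sum_(g <- L) iota (c g) * monomial_seq s g = 0 & exists2 g, g \in L & c g != 0].
Proof.
move=> not_indep; apply: NNPP => no_rel; apply: not_indep => L c uL sz rel g gL.
by apply: NNPP => cg_neq0; apply: no_rel; exists L, c; split => //; exists g => //; apply/eqP.
Qed.

Section HeadCoefficients.
Variables (s : seq D) (L : seq (seq nat)) (c : seq nat -> k).
Hypotheses (uL : uniq L) (szL : forall g, g \in L -> size g = (size s).+1).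

(* The coefficient of [a ^+ i] in [\sum_(g <- L) c g * monomial_seq (a :: s) g]. *)
Definition head_coef i := \sum_(g <- L | head 0%N g == i) iota (c g) * monomial_seq s (behead g).

Let L_ i := [seq behead g | g <- L & head 0%N g == i].

Let cons_head g : g \in L -> g = head 0%N g :: behead g.
Proof. by move=> gL; move: (szL gL); case: g gL. Qed.

Let uniq_L_ i : uniq (L_ i).
Proof.
rewrite map_inj_in_uniq ?filter_uniq // => x y.
rewrite !mem_filter => /andP[/eqP hx xL] /andP[/eqP hy yL] e.
by rewrite (cons_head xL) (cons_head yL) hx hy e.
Qed.

Let size_L_ i g : g \in L_ i -> size g = size s.
Proof. by move=> /mapP[g']; rewrite mem_filter => /andP[_ g'L] ->; rewrite size_behead szL. Qed.

Let head_coefE i : head_coef i = \sum_(g <- L_ i) iota (c (i :: g)) * monomial_seq s g.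
Proof.
rewrite big_map big_filter /head_coef big_seq_cond [RHS]big_seq_cond.
by apply: eq_bigr => g /andP[gL /eqP <-]; rewrite -cons_head.
Qed.

Lemma monomial_comb_head_coef i : monomial_comb s (head_coef i).
Proof. by exists (L_ i), (fun g => c (i :: g)); split; [exact: uniq_L_ | exact: size_L_ |]. Qed.

Lemma head_coef_eq0 g : alg_indep_seq s -> g \in L -> head_coef (head 0%N g) = 0 -> c g = 0.
Proof.
move=> hI gL; rewrite head_coefE => rel.
rewrite (cons_head gL); apply: (hI _ _ (uniq_L_ _) (@size_L_ _) rel).
by apply/mapP; exists g => //; rewrite mem_filter eqxx.
Qed.

Lemma sum_head_coef a B : (forall g, g \in L -> (head 0%N g < B)%N) ->
  \sum_(i < B) head_coef i * a ^+ i = \sum_(g <- L) iota (c g) * monomial_seq (a :: s) g.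
Proof.
move=> ltB; transitivity (\sum_(i < B) \sum_(g <- L | head 0%N g == i)
                           iota (c g) * monomial_seq (a :: s) g).
  apply: eq_bigr => i _; rewrite /head_coef big_distrl /= big_seq_cond [RHS]big_seq_cond.
  apply: eq_bigr => g /andP[gL /eqP hg].
  by rewrite [in monomial_seq (a :: s) g](cons_head gL) monomial_seq_cons hg; ring.
under eq_bigr => i _ do rewrite big_mkcond.
rewrite exchange_big /= big_seq [RHS]big_seq; apply: eq_bigr => g gL.
rewrite (bigD1 (Ordinal (ltB g gL))) //= eqxx big1 ?addr0 // => i ne_ig.
by case: eqP => // e; case/negP: ne_ig; apply/eqP/val_inj.
Qed.

End HeadCoefficients.

Lemma dependent_cons s a : alg_indep_seq s -> ~ alg_indep_seq (a :: s) ->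
  exists B (P : nat -> D), [/\ forall i, monomial_comb s (P i),
    \sum_(i < B) P i * a ^+ i = 0 & exists2 i, (i < B)%N & P i != 0].
Proof.
move=> hI /not_alg_indep_seq[L [c [uL szL rel [g0 g0L cg0_neq0]]]].
pose B := (\sum_(g <- L) head 0%N g).+1.
have ltB g : g \in L -> (head 0%N g < B)%N.
  by move=> gL; rewrite ltnS /B (big_rem g) //= leq_addr.
exists B, (head_coef s L c); split.
- exact: monomial_comb_head_coef.
- by rewrite (@sum_head_coef s L c szL a B ltB).
exists (head 0%N g0); first exact: ltB.
by apply: contra cg0_neq0 => /eqP/(@head_coef_eq0 s L c uL szL g0 hI g0L) ->.
Qed.

Lemma dependent_cons_algebraic s a :
  alg_indep_seq s -> ~ alg_indep_seq (a :: s) -> algebraic_over s a.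
Proof.
move=> hI not_indep; have [B [P [hP hsum [i0 lti0 Pi0]]]] := dependent_cons hI not_indep.
have exP : exists i, (i < B)%N && (P i != 0) by exists i0; rewrite lti0.
have leB i : (i < B)%N && (P i != 0) -> (i <= B)%N by case/andP => /ltnW.
have [E /andP[ltEB PE_neq0] maxE] := ex_maxnP exP leB.
exists (P E), E; split => //; first exact: monomial_comb_kalg.
rewrite /lead_rel; have -> : P E * a ^+ E = \sum_(0 <= i < E) (- P i) * a ^+ i.
  move: hsum; rewrite -(big_mkord xpredT (fun i => P i * a ^+ i)).
  rewrite (big_cat_nat (leq0n E) (ltnW ltEB)) /= (big_ltn ltEB) /=.
  rewrite [X in _ + (_ + X)]big1_seq ?addr0 => [/eqP|i /andP[_]]; last first.
    rewrite mem_index_iota => /andP[ltEi ltiB].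
    have [->|Pi_neq0] := eqVneq (P i) 0; first by rewrite mul0r.
    by have := maxE i; rewrite ltiB Pi_neq0 => /(_ isT); rewrite leqNgt ltEi.
  rewrite addrC addr_eq0 => /eqP ->; rewrite -sumrN.
  by apply: eq_bigr => i _; rewrite mulNr.
apply: kspan_sum => i; rewrite mem_index_iota => /andP[_ ltiE].
apply: kspan_mem; exists (- P i), i; split => //.
exact/kspanN/monomial_comb_kalg.
Qed.

Definition trbasis G s :=
  [/\ alg_indep_seq s, {subset s <= G} & forall g, g \in G -> algebraic_over s g].

Lemma trbasis_exists G : exists s, trbasis G s.
Proof.
elim: G => [|g G [s [hI sG halg]]]; first by exists [::]; split => //; exact: alg_indep_seq_nil.
have [hgI|not_indep] := classic (alg_indep_seq (g :: s)).
  exists (g :: s); split => //.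
    by move=> z; rewrite !inE => /predU1P[->|/sG ->]; rewrite ?eqxx ?orbT.
  move=> g'; rewrite inE => /predU1P[->|g'G]; first by apply: algebraic_over_mem; rewrite mem_head.
  by apply: algebraic_over_mono (halg _ g'G) => p; apply: kalg_cons.
exists s; split => //; first by move=> z /sG zG; rewrite inE zG orbT.
move=> g'; rewrite inE => /predU1P[->|g'G]; last exact: halg.
exact: dependent_cons_algebraic.
Qed.

End TranscendenceBasis.

Section TranscendenceDegree.
Variables (k : fieldType) (D : idomainType) (iota : {rmorphism k -> D}).
Local Notation alg_indep_seq := (alg_indep_seq iota).
Local Notation trbasis := (trbasis iota).
Implicit Types (s G H u : seq D) (z : D).

Lemma subring_gen_is_subring (A : D -> Prop) : is_subring (subring_gen A).
Proof.
split=> [S [] | S [] | x y hx hy S hS hA | x y hx hy S hS hA] //; case: (hS) => _ _ hB hM.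
  by apply: hB; [apply: hx | apply: hy].
by apply: hM; [apply: hx | apply: hy].
Qed.

Lemma subring_gen_mem (A : D -> Prop) x : A x -> subring_gen A x.
Proof. by move=> Ax S _ hA; apply: hA. Qed.

Lemma ksubalg_gen_subring G : is_subring (ksubalg_gen iota G).
Proof. exact: subring_gen_is_subring. Qed.

Lemma ksubalg_gen_mem G x : x \in G -> ksubalg_gen iota G x.
Proof. by move=> xG; apply: subring_gen_mem; right. Qed.

Lemma ksubalg_gen_mono G G' z : {subset G <= G'} ->
  ksubalg_gen iota G z -> ksubalg_gen iota G' z.
Proof.
move=> GG' hz; apply: hz; first exact: subring_gen_is_subring.
by move=> a [[c ->]|aG]; apply: subring_gen_mem; [left; exists c | right; apply: GG'].
Qed.

Definition trdeg_basis G : seq D :=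
  proj1_sig (constructive_indefinite_description _ (trbasis_exists iota G)).

Lemma trdeg_basisP G : trbasis G (trdeg_basis G).
Proof. by rewrite /trdeg_basis; case: constructive_indefinite_description. Qed.

Definition trdeg G := size (trdeg_basis G).

Lemma trdeg_ge G u : alg_indep_seq u -> (forall z, z \in u -> ksubalg_gen iota G z) ->
  (size u <= trdeg G)%N.
Proof.
have [_ _ halg] := trdeg_basisP G.
by move=> hI hu; apply: alg_indep_size_le halg _ hI => z /hu/ksubalg_gen_kalg.
Qed.

Lemma trdeg_subadd G G1 G2 : {subset G <= G1 ++ G2} -> (trdeg G <= trdeg G1 + trdeg G2)%N.
Proof.
move=> GG12; rewrite /trdeg -size_cat.
have [hI sG _] := trdeg_basisP G.
apply: (alg_indep_size_le (G := G1 ++ G2)) hI => [y|z /sG/GG12]; last exact: kalg_mem.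
rewrite mem_cat => /orP[yG|yG].
  have [_ _ /(_ y yG)] := trdeg_basisP G1.
  by apply: algebraic_over_mono => p; apply: kalg_catr.
have [_ _ /(_ y yG)] := trdeg_basisP G2.
by apply: algebraic_over_mono => p; apply: kalg_catl.
Qed.

Lemma trdeg_eq_ksubalg (S : D -> Prop) G d : (forall x, S x <-> ksubalg_gen iota G x) ->
  trdeg_eq iota S d -> d = trdeg G.
Proof.
move=> SG [[x [Sx x_indep]] no_indep]; apply/eqP; rewrite eqn_leq.
have [hI sG _] := trdeg_basisP G.
have -> /= : (d <= trdeg G)%N.
  rewrite -{1}(size_codom_ord x); apply: trdeg_ge; first exact: alg_indep_seq_codom.
  by move=> _ /mapP[i _ ->]; apply/SG.
rewrite leqNgt; apply/negP => lt_d.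
pose t := take d.+1 (trdeg_basis G).
have st : size t = d.+1 by rewrite size_takel.
apply: (no_indep (fun i : 'I_d.+1 => t`_i)).
  move=> i; apply/SG; apply: ksubalg_gen_mem; apply: sG.
  by rewrite /t nth_take //; apply: mem_nth; apply: leq_trans lt_d.
by apply: alg_indep_codom_seq; rewrite codom_nth //; apply: alg_indep_seq_take.
Qed.

End TranscendenceDegree.

Section Difference.
Variables (k : fieldType) (sigk : {rmorphism k -> k}) (D : idomainType)
  (iota : {rmorphism k -> D}) (sig : {rmorphism D -> D}).
Hypothesis hext : forall c : k, sig (iota c) = iota (sigk c).
Local Notation alg_indep_seq := (alg_indep_seq iota).
Local Notation trdeg := (trdeg iota).
Implicit Types (s w H : seq D) (z : D).

Lemma rmorph_monomial_sum s (L : seq (seq nat)) (c : seq nat -> k) :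
  sig (\sum_(g <- L) iota (c g) * monomial_seq s g) =
  \sum_(g <- L) iota (sigk (c g)) * monomial_seq (map sig s) g.
Proof.
rewrite rmorph_sum; apply: eq_bigr => g _.
by rewrite rmorphM hext /monomial_seq rmorph_monomial.
Qed.

Lemma alg_indep_seq_rmorph s : alg_indep_seq (map sig s) -> alg_indep_seq s.
Proof.
move=> hI L c uL sz rel g gL.
have := hI L (fun g => sigk (c g)) uL; rewrite size_map => /(_ sz).
rewrite -rmorph_monomial_sum rel rmorph0 => /(_ erefl g gL) /eqP.
by rewrite fmorph_eq0 => /eqP.
Qed.

Lemma monomial_comb_rmorph_eq0 w P :
  alg_indep_seq (map sig w) -> monomial_comb iota w P -> sig P = 0 -> P = 0.
Proof.
move=> hI [L [c [uL sz ->]]] sigP0; apply: big1_seq => g /andP[_ gL].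
have := hI L (fun g => sigk (c g)) uL; rewrite size_map => /(_ sz).
rewrite -rmorph_monomial_sum sigP0 => /(_ erefl g gL) /eqP.
by rewrite fmorph_eq0 => /eqP ->; rewrite rmorph0 mul0r.
Qed.

(* Reducing a dependence relation for [z :: w] by its lowest power of [z] and applying
   [sig] leaves a nonzero coefficient killed by [sig], against the independence of [sig w]. *)
Lemma alg_indep_seq_kernel w z :
  alg_indep_seq (map sig w) -> z != 0 -> sig z = 0 -> alg_indep_seq (z :: w).
Proof.
move=> hI z_neq0 sigz0; apply: NNPP => /(dependent_cons (alg_indep_seq_rmorph hI)).
move=> [B [P [hP hsum [i1 lti1B Pi1]]]].
have exP : exists i, (i < B)%N && (P i != 0) by exists i1; rewrite lti1B.
have [i0 /andP[lti0B Pi0_neq0] minP] := ex_minnP exP.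
case/negP: Pi0_neq0; apply/eqP/(monomial_comb_rmorph_eq0 hI (hP i0)).
have sum_from_i0 : \sum_(i0 <= i < B) P i * z ^+ i = 0.
  rewrite -[RHS]hsum -(big_mkord xpredT (fun i => P i * z ^+ i)).
  rewrite (big_cat_nat (leq0n i0) (ltnW lti0B)) /= [X in _ = X + _]big1_seq ?add0r //.
  move=> i /andP[_]; rewrite mem_index_iota => /andP[_ lti].
  have [->|Pi_neq0] := eqVneq (P i) 0; first by rewrite mul0r.
  by have := minP i; rewrite (ltn_trans lti lti0B) Pi_neq0 => /(_ isT); rewrite leqNgt lti.
have tail0 : \sum_(i0 <= i < B) P i * z ^+ (i - i0) = 0.
  apply/eqP; rewrite -(mulIr_eq0 _ (mulIf (expf_neq0 i0 z_neq0))); apply/eqP.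
  rewrite -[RHS]sum_from_i0 big_distrl; apply: eq_big_nat => i /andP[le_i0i _] /=.
  by rewrite -mulrA -exprD subnK.
have := congr1 sig tail0; rewrite rmorph0 rmorph_sum (big_ltn lti0B) /= subnn expr0 mulr1.
rewrite big_nat_cond big1 ?addr0 // => i /andP[/andP[lt_i0i _] _].
by rewrite rmorphM rmorphXn sigz0 expr0n subn_eq0 leqNgt lt_i0i mulr0.
Qed.

Lemma ksubalg_gen_rmorph G z : ksubalg_gen iota G z -> ksubalg_gen iota (map sig G) (sig z).
Proof.
move=> hz; apply: (hz (fun x => ksubalg_gen iota (map sig G) (sig x))).
- have [h0 h1 hB hM] := subring_gen_is_subring (fun x => (exists c, x = iota c) \/ x \in map sig G).
  split; rewrite /= ?rmorph0 ?rmorph1 //.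
  + by move=> x y hx hy; rewrite rmorphB; apply: hB.
  + by move=> x y hx hy; rewrite rmorphM; apply: hM.
- move=> a [[c ->]|aG]; apply: subring_gen_mem; first by left; exists (sigk c); rewrite hext.
  by right; apply: map_f.
Qed.

Lemma trdeg_basis_preim H : exists w,
  [/\ {subset w <= H}, alg_indep_seq (map sig w) & size w = trdeg (map sig H)].
Proof.
have [hI sH _] := trdeg_basisP iota (map sig H).
have [w wH w_sH] := subset_map_preim sH.
by exists w; split => //; rewrite ?w_sH // /trdeg -w_sH size_map.
Qed.

Lemma trdeg_map_le H : (trdeg (map sig H) <= trdeg H)%N.
Proof.
have [w [wH hI <-]] := trdeg_basis_preim H.
by apply: trdeg_ge (alg_indep_seq_rmorph hI) _ => z /wH/ksubalg_gen_mem.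
Qed.

Lemma trdeg_map_lt H z : ksubalg_gen iota H z -> z != 0 -> sig z = 0 ->
  (trdeg (map sig H) < trdeg H)%N.
Proof.
move=> Hz z_neq0 sigz0; have [w [wH hI <-]] := trdeg_basis_preim H.
apply: trdeg_ge (alg_indep_seq_kernel hI z_neq0 sigz0) _ => x.
by rewrite inE => /predU1P[-> //|/wH/ksubalg_gen_mem].
Qed.

End Difference.

Section Iterates.
Variables (k : fieldType) (sigk : {rmorphism k -> k}) (D : idomainType)
  (iota : {rmorphism k -> D}) (sig : {rmorphism D -> D}).
Hypothesis hext : forall c : k, sig (iota c) = iota (sigk c).
Implicit Types (G : seq D) (x y z : D).

Lemma iter_rmorphB j x y : iter j sig (x - y) = iter j sig x - iter j sig y.
Proof. by elim: j => [|j IH] //=; rewrite IH rmorphB. Qed.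

Lemma ksubalg_gen_iter j G z : ksubalg_gen iota G z ->
  ksubalg_gen iota (map (iter j sig) G) (iter j sig z).
Proof.
elim: j => [|j IH] hz /=; first by apply: ksubalg_gen_mono hz => x; rewrite map_id.
have -> : map (fun x => sig (iter j sig x)) G = map sig (map (iter j sig) G).
  by rewrite -map_comp.
by apply: (ksubalg_gen_rmorph hext); apply: IH.
Qed.

Variable g : seq D.

Definition gens m := flatten [seq map (iter j sig) g | j <- seq.iota 0 m].

Lemma gensP m x : reflect (exists j y, [/\ (j < m)%N, y \in g & x = iter j sig y]) (x \in gens m).
Proof.
apply: (iffP flattenP) => [[t /mapP[j]]|[j [y [ltjm yg ->]]]].
  by rewrite mem_iota add0n => /andP[_ ltjm] -> /mapP[y yg ->]; exists j, y.
exists (map (iter j sig) g); last exact: map_f.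
by apply/mapP; exists j; rewrite ?mem_iota.
Qed.

Lemma gens_mono m m' : (m <= m')%N -> {subset gens m <= gens m'}.
Proof.
move=> le_mm' x /gensP[j [y [ltjm yg ->]]]; apply/gensP; exists j, y.
by split => //; apply: leq_trans le_mm'.
Qed.

Lemma gens_addn m n : {subset gens (m + n) <= gens n ++ map (iter n sig) (gens m)}.
Proof.
move=> _ /gensP[j [y [ltj yg ->]]]; rewrite mem_cat.
have [ltjn|le_nj] := ltnP j n; first by apply/orP; left; apply/gensP; exists j, y.
apply/orP; right; apply/mapP; exists (iter (j - n)%N sig y); last by rewrite -iterD subnKC.
by apply/gensP; exists (j - n)%N, y; split => //; rewrite ltn_subLR // addnC.
Qed.

Lemma gens_iter j m : {subset map (iter j sig) (gens m) <= gens (j + m)}.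
Proof.
move=> _ /mapP[_ /gensP[i [y [ltim yg ->]]] ->]; apply/gensP.
by exists (j + i)%N, y; rewrite ltn_add2l iterD.
Qed.

Variable R : D -> Prop.
Hypothesis Rg : forall x, R x <-> ksubalg_gen iota g x.

Lemma Rm_gens m x : (0 < m)%N -> Rm sig R m x <-> ksubalg_gen iota (gens m) x.
Proof.
move=> m_gt0; split; move=> hx; apply: hx; try exact: subring_gen_is_subring.
  move=> _ [j [ltjm [y [Ry ->]]]]; have := ksubalg_gen_iter (j := j) ((Rg y).1 Ry).
  by apply: ksubalg_gen_mono => _ /mapP[y' y'g ->]; apply/gensP; exists j, y'.
move=> _ [[c ->]|/gensP[j [y [ltjm yg ->]]]]; apply: subring_gen_mem.
  exists 0%N; split => //; exists (iota c); split => //.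
  by apply/Rg; apply: subring_gen_mem; left; exists c.
by exists j; split => //; exists y; split => //; apply/Rg; apply: ksubalg_gen_mem.
Qed.

Hypothesis Dgen : forall x, dsubring_gen sig R x.

Lemma ksubalg_gen_gens x : exists m, ksubalg_gen iota (gens m) x.
Proof.
pose P x := exists m, ksubalg_gen iota (gens m) x.
have P_op (op : D -> D -> D) : (forall G x y, ksubalg_gen iota G x ->
    ksubalg_gen iota G y -> ksubalg_gen iota G (op x y)) ->
    forall x y, P x -> P y -> P (op x y).
  move=> hop x' y' [m1 h1] [m2 h2]; exists (maxn m1 m2); apply: hop.
    exact: ksubalg_gen_mono (gens_mono (leq_maxl _ _)) h1.
  exact: ksubalg_gen_mono (gens_mono (leq_maxr _ _)) h2.
change (P x); apply: (Dgen x).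
- have [h0 h1 _ _] := ksubalg_gen_subring iota (gens 0).
  split; [by exists 0%N | by exists 0%N | |]; apply: P_op => G.
    by have [_ _ hB _] := ksubalg_gen_subring iota G.
  by have [_ _ _ hM] := ksubalg_gen_subring iota G.
- move=> a Ra; exists 1%N; apply: ksubalg_gen_mono ((Rg a).1 Ra) => y yg.
  by apply/gensP; exists 0%N, y.
- move=> y [m hy]; exists m.+1.
  by apply: ksubalg_gen_mono (ksubalg_gen_iter (j := 1%N) hy) => z /gens_iter.
Qed.

End Iterates.

(* The defect inequalities force [j * p <= c p] for every [j]. *)
Lemma subadd_defect_absurd (c : nat -> nat) :
  ~ (forall L, exists m0, forall m, (m0 <= m)%N -> (c (m + L) + L <= c m + c L)%N).
Proof.
move=> hc.
suff ge_c j p : (j * p <= c p)%N by have := ge_c (c 1).+1 1%N; rewrite muln1 ltnn.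
elim: j p => [|j IH] [|p] //; rewrite ?muln0 //.
have [m0 hm0] := hc p.+1.
have iter_c n : (c (m0 + n * p.+1) + n * p.+1 <= c m0 + n * c p.+1)%N.
  elim: n => [|n IHn]; first by rewrite !mul0n !addn0.
  have := hm0 (m0 + n * p.+1)%N (leq_addr _ _).
  rewrite !mulSn -addnA [(p.+1 + _)%N]addnC addnA.
  by move: IHn; clear; lia.
rewrite leqNgt; apply/negP => lt_c.
set n := (c m0).+1; set A := (n * p.+1)%N.
have := iter_c n; have := IH (m0 + A)%N; rewrite mulnDr.
have : (n * (c p.+1).+1 <= n * (j.+1 * p.+1))%N by rewrite leq_mul2l lt_c orbT.
rewrite mulnS mulnCA -/A [(j.+1 * A)%N]mulSn /n.
move: (c (m0 + A)) (j * A)%N ((c m0).+1 * c p.+1)%N (j * m0)%N => X JA NC JM.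
by clear; lia.
Qed.

Section Growth.
Variables (k : fieldType) (sigk : {rmorphism k -> k}) (D : idomainType)
  (iota : {rmorphism k -> D}) (sig : {rmorphism D -> D}).
Hypothesis hext : forall c : k, sig (iota c) = iota (sigk c).
Variables (R : D -> Prop) (g : seq D).
Hypotheses (Rg : forall x, R x <-> ksubalg_gen iota g x) (Dgen : forall x, dsubring_gen sig R x).
Local Notation gens := (gens sig g).
Local Notation trdeg := (trdeg iota).

Definition growth m := trdeg (gens m).

Lemma growth_trdeg_eq m d : (0 < m)%N -> trdeg_eq iota (Rm sig R m) d -> d = growth m.
Proof. by move=> m_gt0; apply: trdeg_eq_ksubalg => x; apply: Rm_gens. Qed.

Lemma not_inj_on_iter i : ~ inj_on_iter sig i ->
  exists z : D, iter i sig z != 0 /\ iter i.+1 sig z = 0.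
Proof.
move=> not_inj; apply: NNPP => no_z; apply: not_inj => x y e.
apply: NNPP => ne_xy; apply: no_z; exists (x - y); split.
  by rewrite iter_rmorphB subr_eq0; apply/eqP.
by rewrite /= iter_rmorphB rmorphB e subrr.
Qed.

(* Each application of [sig] that kills an element of [k[gens m]] drops the degree. *)
Lemma trdeg_iter_defect m L : (forall i, (i < L)%N -> exists z,
    [/\ ksubalg_gen iota (gens m) z, iter i sig z != 0 & iter i.+1 sig z = 0]) ->
  forall n, (L <= n)%N -> (trdeg (map (iter n sig) (gens m)) + L <= growth m)%N.
Proof.
move=> hz; pose t j := trdeg (map (iter j sig) (gens m)).
have step j : (t j.+1 + minn j.+1 L <= t j + minn j L)%N.
  have e : map (iter j.+1 sig) (gens m) = map sig (map (iter j sig) (gens m)).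
    by rewrite -map_comp.
  rewrite /t e; have le := trdeg_map_le hext (map (iter j sig) (gens m)).
  have [ltjL|le_Lj] := ltnP j L; last by move: le_Lj le; clear; lia.
  have [z [hz_m z_neq0 z0]] := hz j ltjL.
  have := trdeg_map_lt hext (ksubalg_gen_iter hext (j := j) hz_m) z_neq0 z0.
  by move: ltjL; clear; lia.
have t0 : t 0%N = growth m by rewrite /t map_id.
have tj j : (t j + minn j L <= growth m)%N.
  elim: j => [|j IH]; first by rewrite min0n addn0 t0.
  exact: leq_trans (step j) IH.
by move=> n le_Ln; have := tj n; rewrite /t; move: le_Ln; clear; lia.
Qed.

Lemma growth_subadd_defect L : (forall i, (i < L)%N -> ~ inj_on_iter sig i) ->
  exists m0, forall m n, (m0 <= m)%N -> (L <= n)%N ->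
    (growth (m + n) + L <= growth m + growth n)%N.
Proof.
move=> not_inj.
have [m0 hm0] : exists m0, forall i, (i < L)%N -> exists z,
    [/\ ksubalg_gen iota (gens m0) z, iter i sig z != 0 & iter i.+1 sig z = 0].
  elim: L not_inj => [|L IH] not_inj; first by exists 0%N.
  have [m1 hm1] := IH (fun i ltiL => not_inj i (ltnW ltiL)).
  have [z [z_neq0 z0]] := not_inj_on_iter (not_inj L (ltnSn L)).
  have [m2 hz] := ksubalg_gen_gens hext Rg Dgen z.
  exists (m1 + m2)%N => i; rewrite ltnS leq_eqVlt => /predU1P[->|ltiL].
    by exists z; split => //; apply: ksubalg_gen_mono hz; apply: gens_mono; apply: leq_addl.
  have [z' [hz' z'_neq0 z'0]] := hm1 i ltiL; exists z'; split => //.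
  by apply: ksubalg_gen_mono hz'; apply: gens_mono; apply: leq_addr.
exists m0 => m n le_m0m le_Ln.
have := trdeg_subadd iota (@gens_addn _ sig g m n).
have hz i : (i < L)%N -> exists z,
    [/\ ksubalg_gen iota (gens m) z, iter i sig z != 0 & iter i.+1 sig z = 0].
  move=> ltiL; have [z [hz z_neq0 z0]] := hm0 i ltiL.
  by exists z; split => //; apply: ksubalg_gen_mono hz; apply: gens_mono.
have := trdeg_iter_defect hz le_Ln.
rewrite /growth addnC; lia.
Qed.

Lemma inj_on_iter_exists : exists n, inj_on_iter sig n.
Proof.
apply: NNPP => no_n; apply: (@subadd_defect_absurd growth) => L.
have [m0 hm0] := growth_subadd_defect (L := L) (fun i _ hi => no_n (ex_intro _ i hi)).
by exists m0 => m le_m0m; apply: hm0.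
Qed.

(* With [growth m = a * m + b] for large [m], the defect [L] is at most [b]. *)
Lemma inj_on_iter_growth_degree a b : dim_growth iota sig R a b ->
  exists n : nat, (n%:Z <= b) /\ inj_on_iter sig n.
Proof.
move=> [M hM].
have growthE x : (maxn M 1 <= x)%N -> (growth x)%:Z = a * x%:Z + b.
  rewrite geq_max => /andP[le_Mx x_gt0].
  by have [d [hd <-]] := hM x le_Mx; rewrite -(growth_trdeg_eq x_gt0 hd).
have le_b L : (forall i, (i < L)%N -> ~ inj_on_iter sig i) -> L%:Z <= b.
  move=> not_inj; have [m0 hm0] := growth_subadd_defect not_inj.
  set m := maxn m0 (maxn M 1); set n := maxn L (maxn M 1).
  have := hm0 m n (leq_maxl _ _) (leq_maxl _ _).
  rewrite -lez_nat !PoszD !growthE ?leq_maxr //; last first.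
    exact: leq_trans (leq_maxr _ _) (leq_addr _ _).
  by rewrite PoszD mulrDr; lia.
have [bn eb] : exists bn : nat, b = bn%:Z.
  by move: (le_b 0%N (fun i lti => ltac:(by []))); case: (b) => [bn|] // _; exists bn.
apply: NNPP => no_n; suff : bn.+1%:Z <= b by rewrite eb lez_nat ltnn.
apply: le_b => i; rewrite ltnS => le_i_bn inj_i.
by apply: no_n; exists i; rewrite eb lez_nat.
Qed.

End Growth.

Unset Implicit Arguments.

Theorem lemma4p10 (k : fieldType) (sigk : {rmorphism k -> k})
    (D : idomainType) (iota : {rmorphism k -> D}) (sig : {rmorphism D -> D})
    (hext : forall c : k, sig (iota c) = iota (sigk c))
    (hfg : exists R : D -> Prop, fg_ksubalg iota R /\
           forall x : D, dsubring_gen sig R x) :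
  (exists n : nat, inj_on_iter sig n) /\
  (forall (R : D -> Prop), fg_ksubalg iota R ->
     (forall x : D, dsubring_gen sig R x) ->
     forall a b : int, dim_growth iota sig R a b ->
     exists n : nat, (n%:Z <= b) /\ inj_on_iter sig n).
Proof.
split.
  have [R [[g Rg] Dgen]] := hfg.
  exact: (inj_on_iter_exists hext Rg Dgen).
move=> R [g Rg] Dgen a b; exact: (inj_on_iter_growth_degree hext Rg Dgen).
Qed.
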